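(* For an oriented, augmented, right-angled hexagon $(\vec{L}_1,\vec{F}_2,\vec{L}_3,\vec{F}_4,\vec{L}_5,\vec{F}_6)$ in $\mathbb{H}^4$ with any choice of $\{e_1,e_2\}$-quaternion half side-lengths $\delta_1,\delta_3,\delta_5$ and $e_2$-complex half side-lengths $\delta_2,\delta_4,\delta_6$, the following formulas hold: \begin{eqnarray*} & & \sinh\delta_1 \cosh\delta_2 \sinh\delta_3 + \cosh\delta_1 \cosh\delta_2 \cosh\delta_3 \\ &=& \varepsilon\,(\sinh\delta_4 \cosh\delta_5 \sinh\delta_6 + \cosh\delta_4 \cosh\delta_5 \cosh\delta_6)^*; \\ & & \sinh\delta_1 \cosh\delta_2 \cosh\delta_3 + \cosh\delta_1 \cosh\delta_2 \sinh\delta_3 \\ &=& \varepsilon\,(\sinh\delta_4 \sinh\delta_5 \sinh\delta_6 - \cosh\delta_4 \sinh\delta_5 \cosh\delta_6)^*; \\ & & \sinh\delta_1 \sinh\delta_2 \sinh\delta_3 - \cosh\delta_1 \sinh\delta_2 \cosh\delta_3 \\ &=& \varepsilon\,(\sinh\delta_4 \cosh\delta_5 \cosh\delta_6 + \cosh\delta_4 \cosh\delta_5 \sinh\delta_6)^*; \\ & & \sinh\delta_1 \sinh\delta_2 \cosh\delta_3 - \cosh\delta_1 \sinh\delta_2 \sinh\delta_3 \\ &=& \varepsilon\,(\sinh\delta_4 \sinh\delta_5 \cosh\delta_6 - \cosh\delta_4 \sinh\delta_5 \sinh\delta_6)^*, \end{eqnarray*} with $\varepsilon = 1$ or $-1$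 (the same $\varepsilon$ in all four identities), depending on the choices of the six half side-lengths $\{\delta_n\}_{n=1}^{6}$.
   Context: $\mathbb{A}_2$ is the Clifford algebra $\mathsf{Cl}_{0,2}$: the real associative algebra generated by $e_1,e_2$ with $e_1^2=e_2^2=-1$, $e_1e_2+e_2e_1=0$ (isomorphic to the quaternions). Its reverse involution is $(x_0+x_1e_1+x_2e_2+x_{12}e_1e_2)^*=x_0+x_1e_1+x_2e_2-x_{12}e_1e_2$, and $(ab)^*=b^*a^*$. For $x\in\mathbb{A}_2$, $\exp x=\sum_{m\ge0}x^m/m!$, $\cosh x=(\exp x+\exp(-x^* ))/2$, $\sinh x=(\exp x-\exp(-x^* ))/2$; $\log$ denotes the multivalued inverse of $\exp$. A nonzero $a\in\mathbb{A}_2$ is written $a=|a|(\cos\theta+u\sin\theta)$ with $u$ a unit element with zero real part ($u^2=-1$; unique up to sign if $a\notin\mathbb{R}$, arbitrary if $a\in\mathbb{R}$); its periods are $2m\pi u$, $m\in\mathbb{Z}$. $\mathbb{H}^4$ is the upper half-space $\{x_0+x_1e_1+x_2e_2+x_3e_3: x_3>0\}$ (inside the Clifford algebra $\mathsf{Cl}_{0,3}$) with boundary $(\mathbb{R}+\mathbb{R}e_1+\mathbb{R}e_2)\cup\{\infty\}$, oriented by the ordered frame at $e_3$ given by the oriented geodesics from $-1$ to $1$, $-e_1$ to $e_1$, $-e_2$ to $e_2$, $0$ to $\infty$. Orientation-preserving isometries of $\mathbb{H}^4$ are the Möbius maps $x\mapsto(ax+b)(cx+d)^{-1}$ given by Vahlen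 matrices $\pm\begin{pmatrix}a&b\\c&d\end{pmatrix}$ with $a,b,c,d\in\mathbb{A}_2$, $ad^*-bc^*=1$, $ab^*,cd^*\in\mathbb{R}+\mathbb{R}e_1+\mathbb{R}e_2$. Write $\vec{L}_{[u,v]}$ for the geodesic from $u$ to $v$; $\vec{L}_{\rm v}=\vec{L}_{[0,\infty]}$; $\vec{F}_{\rm h}=(\vec{L}_{[-1,1]},\vec{\Pi}_{\rm h})$ where $\vec{\Pi}_{\rm h}$ is the plane containing $L_{[-1,1]}$ and $L_{[-e_1,e_1]}$ oriented by this ordered pair. A flag $(L,\Pi)$ is a line $L$ contained in a totally geodesic plane $\Pi$; an oriented flag has both oriented. A line $L'$ and a flag $(L,\Pi)$ are orthogonal if $L'$ meets $L$ and is perpendicular to $\Pi$. An oriented augmented right-angled hexagon $(\vec{L}_1,\vec{F}_2,\vec{L}_3,\vec{F}_4,\vec{L}_5,\vec{F}_6)$ consists of oriented lines $\vec{L}_1,\vec{L}_3,\vec{L}_5$ and oriented flags $\vec{F}_n=(\vec{L}_n,\vec{\Pi}_n)$, $n=2,4,6$, with each consecutive pair (indices mod 6) orthogonal. For $n=1,3,5$: let $\iota$ be the orientation-preserving isometry with $\iota(\vec{L}_n)=\vec{L}_{\rm v}$, $\iota(\vec{F}_{n-1})=\vec{F}_{\rm h}$; the orientation-preserving isometry fixing $\vec{L}_{\rm v}$ and sending $\vec{F}_{\rm h}$ to $\iota(\vec{F}_{n+1})$ has Vahlen matrices $\pm\mathrm{diag}(a,(a^* )^{-1})$; a quaternion half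 side-length is $\delta_n\in\log(\pm a)$, taken modulo period. For $n=2,4,6$: let $\iota$ satisfy $\iota(\vec{F}_n)=\vec{F}_{\rm h}$, $\iota(\vec{L}_{n-1})=\vec{L}_{\rm v}$; the orientation-preserving isometry preserving $\vec{F}_{\rm h}$ and sending $\vec{L}_{\rm v}$ to $\iota(\vec{L}_{n+1})$ has Vahlen matrices $\pm\begin{pmatrix}\cosh\delta_n&\sinh\delta_n\\ \sinh\delta_n&\cosh\delta_n\end{pmatrix}$ with $\delta_n\in\mathbb{R}+\mathbb{R}e_2$ modulo $2\pi e_2$, determined up to adding $\pi e_2$; this is an $e_2$-complex half side-length. *)

From Stdlib Require Import Reals Factorial.
From Coquelicot Require Import Coquelicot.
Open Scope R_scope.

(* The algebra A_2 = Cl_{0,2}: x = x0 + x1 e1 + x2 e2 + x12 e1e2.       *)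
(* Fields: q0 = x0, q1 = x1, q2 = x2, q3 = x12.                          *)
(* e1^2 = e2^2 = -1, e1e2 = -e2e1 (so (e1,e2,e1e2) = quaternions i,j,k). *)
Record A2 := mkA { q0 : R; q1 : R; q2 : R; q3 : R }.

Definition A0 : A2 := mkA 0 0 0 0.
Definition A1 : A2 := mkA 1 0 0 0.
Definition rA (r : R) : A2 := mkA r 0 0 0.
Definition Ae1 : A2 := mkA 0 1 0 0.
Definition Ae2 : A2 := mkA 0 0 1 0.

Definition addA (x y : A2) : A2 :=
  mkA (q0 x + q0 y) (q1 x + q1 y) (q2 x + q2 y) (q3 x + q3 y).
Definition oppA (x : A2) : A2 := mkA (- q0 x) (- q1 x) (- q2 x) (- q3 x).
Definition subA (x y : A2) : A2 := addA x (oppA y).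
Definition scaleA (r : R) (x : A2) : A2 :=
  mkA (r * q0 x) (r * q1 x) (r * q2 x) (r * q3 x).
Definition mulA (x y : A2) : A2 :=
  mkA (q0 x * q0 y - q1 x * q1 y - q2 x * q2 y - q3 x * q3 y)
      (q0 x * q1 y + q1 x * q0 y + q2 x * q3 y - q3 x * q2 y)
      (q0 x * q2 y - q1 x * q3 y + q2 x * q0 y + q3 x * q1 y)
      (q0 x * q3 y + q1 x * q2 y - q2 x * q1 y + q3 x * q0 y).

(* reverse involution: (x0+x1e1+x2e2+x12e1e2)^* = x0+x1e1+x2e2-x12e1e2 *)
Definition revA (x : A2) : A2 := mkA (q0 x) (q1 x) (q2 x) (- q3 x).

(* multiplicative inverse in the division algebra A_2 (0 for x = 0) *)
Definition norm2A (x : A2) : R := q0 x ^ 2 + q1 x ^ 2 + q2 x ^ 2 + q3 x ^ 2.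
Definition invA (x : A2) : A2 :=
  scaleA (/ norm2A x) (mkA (q0 x) (- q1 x) (- q2 x) (- q3 x)).

Definition is_vec (x : A2) : Prop := q3 x = 0.

Fixpoint powA (x : A2) (m : nat) : A2 :=
  match m with O => A1 | S k => mulA x (powA x k) end.

Definition expA (x : A2) : A2 :=
  mkA (Series (fun m => q0 (powA x m) / INR (Factorial.fact m)))
      (Series (fun m => q1 (powA x m) / INR (Factorial.fact m)))
      (Series (fun m => q2 (powA x m) / INR (Factorial.fact m)))
      (Series (fun m => q3 (powA x m) / INR (Factorial.fact m))).

Definition coshA (x : A2) : A2 :=
  scaleA (/ 2) (addA (expA x) (expA (oppA (revA x)))).
Definition sinhA (x : A2) : A2 :=
  scaleA (/ 2) (subA (expA x) (expA (oppA (revA x)))).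

Definition A2_eq_dec (x y : A2) : {x = y} + {x <> y}.
Proof. decide equality; apply Req_EM_T. Defined.

(* dH^4 = (R + R e1 + R e2) u {oo}  (None = oo).                        *)
Record Vahlen := mkV { va : A2; vb : A2; vc : A2; vd : A2 }.

Definition is_vahlen (M : Vahlen) : Prop :=
  subA (mulA (va M) (revA (vd M))) (mulA (vb M) (revA (vc M))) = A1 /\
  is_vec (mulA (va M) (revA (vb M))) /\
  is_vec (mulA (vc M) (revA (vd M))).

Definition Bdry := option A2.

Definition is_bdry (p : Bdry) : Prop :=
  match p with None => True | Some x => is_vec x end.

Definition mob (M : Vahlen) (p : Bdry) : Bdry :=
  match p with
  | None => if A2_eq_dec (vc M) A0 then None
            else Some (mulA (va M) (invA (vc M)))
  | Some x =>
      let den := addA (mulA (vc M) x) (vd M) in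
      if A2_eq_dec den A0 then None
      else Some (mulA (addA (mulA (va M) x) (vb M)) (invA den))
  end.

(* Oriented lines: L_[u,v] is encoded by its ordered pair of endpoints. *)
Definition Line := (Bdry * Bdry)%type.

Definition is_line (L : Line) : Prop :=
  is_bdry (fst L) /\ is_bdry (snd L) /\ fst L <> snd L.

Definition line_act (M : Vahlen) (L : Line) : Line :=
  (mob M (fst L), mob M (snd L)).

Definition Lv : Line := (Some A0, None).

(* Oriented flags (L, Pi): encoded by the oriented line L = L_[u,v]     *)
(* together with the ideal boundary of the positive half-plane of Pi   *)
(* bounded by L (an open arc of the circle dPi; this encodes the       *)
(* orientation of Pi given that of L).                                 *)
Record Flag := mkF { fl_line : Line; fl_arc : Bdry -> Prop }.

Definition flag_act (M : Vahlen) (F : Flag) : Flag :=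
  mkF (line_act M (fl_line F))
      (fun y => exists x, fl_arc F x /\ y = mob M x).

(* F_h = (L_[-1,1], Pi_h), Pi_h oriented by (L_[-1,1], L_[-e1,e1]):
   the positive side of L_[-1,1] in Pi_h is the one containing e1, whose
   ideal boundary is the arc {cos t + e1 sin t : 0 < t < pi}. *)
Definition Fh : Flag :=
  mkF (Some (rA (-1)), Some A1)
      (fun y => exists t, 0 < t < PI /\ y = Some (mkA (cos t) (sin t) 0 0)).

(* oriented flags of H^4 = images of F_h under orientation-preserving
   isometries *)
Definition is_flag (F : Flag) : Prop :=
  exists M, is_vahlen M /\ F = flag_act M Fh.

(* The half-turn about Pi_h (the
   orientation-preserving isometry fixing Pi_h pointwise) acts on the
   boundary by x |-> sigma(x)/|x|^2, sigma flipping the e2-coordinate.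
   A line is perpendicular to Pi_h iff this half-turn swaps its
   endpoints; it meets L_[-1,1] (= Pi_h  n  {x1 = 0}) iff moreover it lies
   in the hyperplane {x1 = 0}, i.e. its endpoints lie in (R + R e2) u {oo}. *)
Definition halfturn_h (p : Bdry) : Bdry :=
  match p with
  | None => Some A0
  | Some x => if A2_eq_dec x A0 then None
              else Some (scaleA (/ norm2A x) (mkA (q0 x) (q1 x) (- q2 x) (q3 x)))
  end.

Definition in_x1_zero (p : Bdry) : Prop :=
  match p with None => True | Some x => q1 x = 0 /\ q3 x = 0 end.

Definition orth_std (L : Line) : Prop :=
  in_x1_zero (fst L) /\ in_x1_zero (snd L) /\ fst L <> snd L /\
  halfturn_h (fst L) = snd L.

Definition orthogonal (L' : Line) (F : Flag) : Prop :=
  exists M, is_vahlen M /\ flag_act M F = Fh /\ orth_std (line_act M L').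

Definition diagV (a : A2) : Vahlen := mkV a A0 A0 (invA (revA a)).

Definition Mdelta (d : A2) : Vahlen := mkV (coshA d) (sinhA d) (sinhA d) (coshA d).

(* n odd: delta is a quaternion half side-length of L_n, with neighbours
   F_{n-1} (Fprev) and F_{n+1} (Fnext). *)
Definition quat_hsl (d : A2) (Ln : Line) (Fprev Fnext : Flag) : Prop :=
  exists (iota : Vahlen) (a : A2),
    is_vahlen iota /\ line_act iota Ln = Lv /\ flag_act iota Fprev = Fh /\
    a <> A0 /\ is_vahlen (diagV a) /\ line_act (diagV a) Lv = Lv /\
    flag_act (diagV a) Fh = flag_act iota Fnext /\
    (expA d = a \/ expA d = oppA a).

(* n even: delta in R + R e2 is an e2-complex half side-length of F_n,
   with neighbours L_{n-1} (Lprev) and L_{n+1} (Lnext). *)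
Definition cplx_hsl (d : A2) (Fn : Flag) (Lprev Lnext : Line) : Prop :=
  q1 d = 0 /\ q3 d = 0 /\
  exists iota : Vahlen,
    is_vahlen iota /\ flag_act iota Fn = Fh /\ line_act iota Lprev = Lv /\
    is_vahlen (Mdelta d) /\ flag_act (Mdelta d) Fh = Fh /\
    line_act (Mdelta d) Lv = line_act iota Lnext.

(* The half side-lengths say that consecutive normalizing isometries (those moving a side
   of the hexagon and a neighbour to (L_v, F_h)) differ by a known Vahlen matrix:
   diag(e^d, e^(-rev d)) = diag(cosh d + sinh d, cosh d - sinh d) at a line, and
   [[cosh d, sinh d], [sinh d, cosh d]] at a flag.  The orientation-preserving isometries
   fixing both L_v and F_h are only +-1: fixing 0, 1 and oo forces diag(a, a) with
   a (rev a) = 1, and keeping e1 on the positive arc of F_h forces a = +-1.  So these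
   relations hold up to sign, and going around the hexagon gives P1 P2 P3 = +-(P4 P5 P6)^-1.
   The inverse of a Vahlen matrix is its reversed adjugate [[rev d, -rev b], [-rev c, rev a]],
   whence the reversal in the formulas, which are half the sums and differences of the
   corresponding entries.  The only analytic input is exp(x) exp(-x) = 1, from the Cauchy
   product of the exponential series. *)

From Stdlib Require Import Reals Lra Psatz Lia Factorial Ncring Ncring_tac
  FunctionalExtensionality PropExtensionality.
From Coquelicot Require Import Coquelicot.
Open Scope R_scope.
Set Bullet Behavior "Strict Subproofs".

(** * The algebra [A2] *)

Lemma A2_ext (x y : A2) :
  q0 x = q0 y -> q1 x = q1 y -> q2 x = q2 y -> q3 x = q3 y -> x = y.
Proof. destruct x, y; simpl; intros; subst; reflexivity. Qed.

Ltac coordwise :=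
  intros; repeat match goal with x : A2 |- _ => destruct x end;
  apply A2_ext; unfold mulA, addA, subA, oppA, scaleA, revA, rA, A0, A1, Ae1; simpl.

Ltac coord_ring := coordwise; ring.

#[local] Instance A2_ring_ops : @Ring_ops A2 A0 A1 addA mulA subA oppA eq := {}.

#[local] Instance A2_ring : Ncring.Ring (Ro := A2_ring_ops).
Proof.
  split; try exact eq_equivalence;
    try (intros ? ? -> ? ? ->; reflexivity); try (intros ? ? ->; reflexivity);
    coord_ring.
Qed.

Arguments addA : simpl never.
Arguments subA : simpl never.
Arguments oppA : simpl never.
Arguments mulA : simpl never.
Arguments scaleA : simpl never.
Arguments revA : simpl never.
Arguments invA : simpl never.

Lemma revA_mulA x y : revA (mulA x y) = mulA (revA y) (revA x). Proof. coord_ring. Qed.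
Lemma revA_addA x y : revA (addA x y) = addA (revA x) (revA y). Proof. coord_ring. Qed.
Lemma revA_subA x y : revA (subA x y) = subA (revA x) (revA y). Proof. coord_ring. Qed.
Lemma revA_oppA x : revA (oppA x) = oppA (revA x). Proof. coord_ring. Qed.
Lemma revA_involutive x : revA (revA x) = x. Proof. coord_ring. Qed.
Lemma revA_A0 : revA A0 = A0. Proof. coord_ring. Qed.
Lemma revA_A1 : revA A1 = A1. Proof. coord_ring. Qed.

(* [revA] is an anti-automorphism: once it is pushed down to the atoms, identities in [A2]
   become identities of noncommutative polynomials.  The reifier of [non_commutative_ring]
   is run with no hypotheses around and with the reversed atoms generalized, which keeps it
   fast and reliable. *)
Ltac push_revA :=
  repeat progress rewrite ?revA_addA, ?revA_subA, ?revA_oppA, ?revA_mulA,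
    ?revA_involutive, ?revA_A0, ?revA_A1.

Ltac nc_ring :=
  push_revA;
  repeat match goal with H : ?P |- _ => match type of P with Prop => clear H end end;
  repeat match goal with |- context [revA ?x] => generalize (revA x); intro end;
  non_commutative_ring.

Lemma subA_eq0 x y : subA x y = A0 -> x = y.
Proof. intros H; transitivity (addA (subA x y) y); [nc_ring | rewrite H; nc_ring]. Qed.

Lemma is_vec_revA x : is_vec x <-> revA x = x.
Proof.
  destruct x as [a b c d]; unfold is_vec, revA; simpl; split.
  - intros ->; f_equal; ring.
  - intros H; injection H; lra.
Qed.

Lemma norm2A_mulA x y : norm2A (mulA x y) = norm2A x * norm2A y.
Proof. destruct x, y; unfold norm2A, mulA; simpl; ring. Qed.

Lemma norm2A_revA x : norm2A (revA x) = norm2A x.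
Proof. destruct x; unfold norm2A, revA; simpl; ring. Qed.

Lemma norm2A_ge0 x : 0 <= norm2A x.
Proof. destruct x; unfold norm2A; simpl; nra. Qed.

Lemma norm2A_eq0 x : norm2A x = 0 -> x = A0.
Proof.
  destruct x as [a b c d]; unfold norm2A; simpl; intros H.
  apply A2_ext; simpl; nra.
Qed.

Lemma mulA_integral x y : mulA x y = A0 -> x = A0 \/ y = A0.
Proof.
  intros H; apply (f_equal norm2A) in H.
  rewrite norm2A_mulA in H; unfold norm2A at 3 in H; simpl in H.
  destruct (Rmult_integral (norm2A x) (norm2A y)) as [Hx | Hy]; [lra | |].
  - left; apply norm2A_eq0, Hx.
  - right; apply norm2A_eq0, Hy.
Qed.

Lemma A1_neq_A0 : A1 <> A0.
Proof. intros H; injection H; lra. Qed.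

Lemma mulA_eq1_neq0 x y : mulA x y = A1 -> x <> A0 /\ y <> A0.
Proof.
  intros H; split; intros ->; apply A1_neq_A0; rewrite <- H; nc_ring.
Qed.

Lemma mulA_eq0_reg_l x y : x <> A0 -> mulA x y = A0 -> y = A0.
Proof. intros Hx H; destruct (mulA_integral x y H); [contradiction | assumption]. Qed.

Lemma invA_r x : x <> A0 -> mulA x (invA x) = A1.
Proof.
  intros Hx; assert (Hn : norm2A x <> 0) by (intros E; apply Hx, norm2A_eq0, E).
  destruct x as [a b c d]; unfold norm2A in Hn; simpl in Hn.
  apply A2_ext; unfold mulA, invA, scaleA, norm2A; simpl; field; lra.
Qed.

Lemma invA_l x : x <> A0 -> mulA (invA x) x = A1.
Proof.
  intros Hx; assert (Hn : norm2A x <> 0) by (intros E; apply Hx, norm2A_eq0, E).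
  destruct x as [a b c d]; unfold norm2A in Hn; simpl in Hn.
  apply A2_ext; unfold mulA, invA, scaleA, norm2A; simpl; field; lra.
Qed.

Lemma invA_unique x y : mulA x y = A1 -> invA x = y.
Proof.
  intros H; destruct (mulA_eq1_neq0 _ _ H) as [Hx _]; symmetry.
  transitivity (mulA (mulA (invA x) x) y); [rewrite invA_l by exact Hx; nc_ring|].
  transitivity (mulA (invA x) (mulA x y)); [nc_ring|].
  rewrite H; nc_ring.
Qed.

Lemma invA_mulA x y : x <> A0 -> y <> A0 -> invA (mulA x y) = mulA (invA y) (invA x).
Proof.
  intros Hx Hy; apply invA_unique.
  transitivity (mulA x (mulA (mulA y (invA y)) (invA x))); [nc_ring|].
  rewrite invA_r by exact Hy.
  transitivity (mulA x (invA x)); [nc_ring | apply invA_r, Hx].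
Qed.

(** * Vahlen matrices *)

Definition mulV (M N : Vahlen) : Vahlen :=
  mkV (addA (mulA (va M) (va N)) (mulA (vb M) (vc N)))
      (addA (mulA (va M) (vb N)) (mulA (vb M) (vd N)))
      (addA (mulA (vc M) (va N)) (mulA (vd M) (vc N)))
      (addA (mulA (vc M) (vb N)) (mulA (vd M) (vd N))).

Definition invV (M : Vahlen) : Vahlen :=
  mkV (revA (vd M)) (oppA (revA (vb M))) (oppA (revA (vc M))) (revA (va M)).

Definition oneV : Vahlen := mkV A1 A0 A0 A1.

Definition scaleV (r : R) (M : Vahlen) : Vahlen :=
  mkV (scaleA r (va M)) (scaleA r (vb M)) (scaleA r (vc M)) (scaleA r (vd M)).

Definition pdet (M : Vahlen) : A2 :=
  subA (mulA (va M) (revA (vd M))) (mulA (vb M) (revA (vc M))).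

Lemma Vahlen_ext (M N : Vahlen) :
  va M = va N -> vb M = vb N -> vc M = vc N -> vd M = vd N -> M = N.
Proof. destruct M, N; simpl; intros; subst; reflexivity. Qed.

Ltac entry_ring tac :=
  intros; repeat match goal with M : Vahlen |- _ => destruct M end;
  apply Vahlen_ext; cbn; tac.

Lemma mulV_assoc M N P : mulV M (mulV N P) = mulV (mulV M N) P.
Proof. entry_ring nc_ring. Qed.

Lemma mulV_oneV_l M : mulV oneV M = M. Proof. entry_ring nc_ring. Qed.
Lemma mulV_oneV_r M : mulV M oneV = M. Proof. entry_ring nc_ring. Qed.

Lemma mulV_scaleV_l r M N : mulV (scaleV r M) N = scaleV r (mulV M N).
Proof. entry_ring coord_ring. Qed.
Lemma mulV_scaleV_r r M N : mulV M (scaleV r N) = scaleV r (mulV M N).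
Proof. entry_ring coord_ring. Qed.
Lemma scaleV_scaleV r s M : scaleV r (scaleV s M) = scaleV (r * s) M.
Proof. entry_ring coord_ring. Qed.
Lemma scaleV_1 M : scaleV 1 M = M. Proof. entry_ring coord_ring. Qed.

Lemma invV_mulV M N : invV (mulV M N) = mulV (invV N) (invV M).
Proof. entry_ring nc_ring. Qed.
Lemma invV_involutive M : invV (invV M) = M. Proof. entry_ring nc_ring. Qed.
Lemma invV_scaleV r M : invV (scaleV r M) = scaleV r (invV M).
Proof. entry_ring coord_ring. Qed.

Lemma invV_r M : is_vahlen M -> mulV M (invV M) = oneV.
Proof.
  destruct M as [a b c d]; intros [Hdet [Hab Hcd]]; cbn in Hdet, Hab, Hcd.
  apply is_vec_revA in Hab, Hcd.
  apply Vahlen_ext; cbn.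
  - rewrite <- Hdet; nc_ring.
  - transitivity (subA (revA (mulA a (revA b))) (mulA a (revA b)));
      [nc_ring | rewrite Hab; nc_ring].
  - transitivity (subA (mulA c (revA d)) (revA (mulA c (revA d))));
      [nc_ring | rewrite Hcd; nc_ring].
  - rewrite <- revA_A1, <- Hdet; nc_ring.
Qed.

Lemma vahlen_kernel M y1 y2 : is_vahlen M ->
  addA (mulA (va M) y1) (mulA (vb M) y2) = A0 ->
  addA (mulA (vc M) y1) (mulA (vd M) y2) = A0 -> y1 = A0 /\ y2 = A0.
Proof.
  destruct M as [a b c d]; intros [Hdet [Hab _]] E1 E2; cbn in *.
  apply is_vec_revA in Hab.
  destruct (A2_eq_dec a A0) as [-> | Ha].
  - assert (Hb : mulA b (oppA (revA c)) = A1) by (rewrite <- Hdet; nc_ring).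
    assert (Hc : mulA c (oppA (revA b)) = A1)
      by (rewrite <- revA_A1, <- Hdet; nc_ring).
    assert (Hy2 : y2 = A0).
    { apply (mulA_eq0_reg_l b); [apply (mulA_eq1_neq0 _ _ Hb)|].
      rewrite <- E1; nc_ring. }
    subst y2; split; [|reflexivity].
    apply (mulA_eq0_reg_l c); [apply (mulA_eq1_neq0 _ _ Hc)|].
    rewrite <- E2; nc_ring.
  - (* the Schur complement of [a] *)
    set (S := subA d (mulA (mulA c (invA a)) b)).
    assert (HS : mulA S (revA a) = A1).
    { transitivity (subA (mulA d (revA a))
                         (mulA (mulA c (invA a)) (revA (mulA a (revA b)))));
        [unfold S; nc_ring | rewrite Hab].
      transitivity (subA (mulA d (revA a)) (mulA (mulA c (mulA (invA a) a)) (revA b)));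
        [nc_ring | rewrite invA_l by exact Ha].
      transitivity (revA (subA (mulA a (revA d)) (mulA b (revA c))));
        [nc_ring | rewrite Hdet; apply revA_A1]. }
    assert (Hy2 : y2 = A0).
    { apply (mulA_eq0_reg_l S); [apply (mulA_eq1_neq0 _ _ HS)|].
      transitivity (addA (mulA d y2) (mulA (mulA c (invA a))
                     (subA (mulA a y1) (addA (mulA a y1) (mulA b y2)))));
        [unfold S; nc_ring | rewrite E1].
      transitivity (addA (mulA d y2) (mulA (mulA c (mulA (invA a) a)) y1));
        [nc_ring | rewrite invA_l by exact Ha].
      rewrite <- E2; nc_ring. }
    subst y2; split; [|reflexivity].
    apply (mulA_eq0_reg_l a); [exact Ha|].
    rewrite <- E1; nc_ring.
Qed.

Lemma mulV_reg_l M X Y : is_vahlen M -> mulV M X = mulV M Y -> X = Y.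
Proof.
  intros HM E; destruct X as [x1 x2 x3 x4], Y as [y1 y2 y3 y4].
  assert (Ea := f_equal va E); assert (Eb := f_equal vb E);
  assert (Ec := f_equal vc E); assert (Ed := f_equal vd E); cbn in Ea, Eb, Ec, Ed.
  destruct (vahlen_kernel M (subA x1 y1) (subA x3 y3) HM) as [K1 K3];
  [ transitivity (subA (addA (mulA (va M) x1) (mulA (vb M) x3))
                       (addA (mulA (va M) y1) (mulA (vb M) y3)))
  | transitivity (subA (addA (mulA (vc M) x1) (mulA (vd M) x3))
                       (addA (mulA (vc M) y1) (mulA (vd M) y3))) | ];
  [nc_ring | rewrite Ea; nc_ring | nc_ring | rewrite Ec; nc_ring |].
  destruct (vahlen_kernel M (subA x2 y2) (subA x4 y4) HM) as [K2 K4];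
  [ transitivity (subA (addA (mulA (va M) x2) (mulA (vb M) x4))
                       (addA (mulA (va M) y2) (mulA (vb M) y4)))
  | transitivity (subA (addA (mulA (vc M) x2) (mulA (vd M) x4))
                       (addA (mulA (vc M) y2) (mulA (vd M) y4))) | ];
  [nc_ring | rewrite Eb; nc_ring | nc_ring | rewrite Ed; nc_ring |].
  apply subA_eq0 in K1, K2, K3, K4; subst; reflexivity.
Qed.

Lemma invV_l M : is_vahlen M -> mulV (invV M) M = oneV.
Proof.
  intros HM; apply (mulV_reg_l M); [exact HM|].
  rewrite mulV_assoc, invV_r, mulV_oneV_l, mulV_oneV_r by exact HM; reflexivity.
Qed.

Lemma invV_vahlen M : is_vahlen M -> is_vahlen (invV M).
Proof.
  intros HM; assert (E := invV_l M HM); destruct M as [a b c d].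
  assert (Ea := f_equal va E); assert (Eb := f_equal vb E);
  assert (Ec := f_equal vc E); unfold is_vahlen; cbn in Ea, Eb, Ec |- *.
  split; [|split].
  - rewrite <- Ea; nc_ring.
  - apply is_vec_revA, subA_eq0; rewrite <- Eb; nc_ring.
  - apply is_vec_revA; symmetry; apply subA_eq0; rewrite <- Ec; nc_ring.
Qed.

Lemma pdet_entry M : pdet M = va (mulV M (invV M)).
Proof. destruct M; unfold pdet; cbn; nc_ring. Qed.

Lemma pdet_mulV M N : pdet M = A1 -> is_vahlen N -> pdet (mulV M N) = A1.
Proof.
  intros HM HN.
  rewrite pdet_entry, invV_mulV, mulV_assoc, <- (mulV_assoc M N), invV_r, mulV_oneV_r,
    <- pdet_entry by exact HN.
  exact HM.
Qed.

(** * The Moebius action on the boundary *)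

(* The boundary point with homogeneous coordinates [u : w], written with the same test as
   [mob] so that [mob] unfolds to it by conversion. *)
Definition point (v : A2 * A2) : Bdry :=
  if A2_eq_dec (snd v) A0 then None else Some (mulA (fst v) (invA (snd v))).

Definition hcoord (p : Bdry) : A2 * A2 :=
  match p with Some x => (x, A1) | None => (A1, A0) end.

Definition mulV_col (M : Vahlen) (v : A2 * A2) : A2 * A2 :=
  (addA (mulA (va M) (fst v)) (mulA (vb M) (snd v)),
   addA (mulA (vc M) (fst v)) (mulA (vd M) (snd v))).

Lemma mob_Some M x :
  mob M (Some x) = point (addA (mulA (va M) x) (vb M), addA (mulA (vc M) x) (vd M)).
Proof. reflexivity. Qed.

Lemma mob_None M : mob M None = point (va M, vc M).
Proof. reflexivity. Qed.

Lemma point_None u w : point (u, w) = None -> w = A0.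
Proof. unfold point; cbn [fst snd]; destruct (A2_eq_dec w A0); [trivial | discriminate]. Qed.

Lemma point_Some u w y : point (u, w) = Some y -> w <> A0 /\ u = mulA y w.
Proof.
  unfold point; cbn [fst snd]; destruct (A2_eq_dec w A0) as [|Hw]; [discriminate|].
  intros E; injection E as <-; split; [exact Hw|].
  transitivity (mulA u (mulA (invA w) w)); [rewrite invA_l by exact Hw|]; nc_ring.
Qed.

Lemma point_hcoord p : point (hcoord p) = p.
Proof.
  destruct p as [x|]; unfold point; cbn [hcoord fst snd].
  - destruct (A2_eq_dec A1 A0) as [E|_]; [destruct (A1_neq_A0 E)|].
    f_equal; transitivity (mulA x (mulA A1 (invA A1))); [nc_ring|].
    rewrite invA_r by exact A1_neq_A0; nc_ring.
  - destruct (A2_eq_dec A0 A0); [reflexivity | contradiction].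
Qed.

Lemma point_mulA_r u w s : s <> A0 -> point (mulA u s, mulA w s) = point (u, w).
Proof.
  intros Hs; unfold point; cbn [fst snd].
  destruct (A2_eq_dec w A0) as [->|Hw].
  - destruct (A2_eq_dec (mulA A0 s) A0) as [|E]; [reflexivity|].
    exfalso; apply E; nc_ring.
  - destruct (A2_eq_dec (mulA w s) A0) as [E|_].
    + destruct (mulA_integral w s E); contradiction.
    + f_equal; rewrite invA_mulA by assumption.
      transitivity (mulA u (mulA (mulA s (invA s)) (invA w))); [nc_ring|].
      rewrite invA_r by exact Hs; nc_ring.
Qed.

Lemma mob_point M v : v <> (A0, A0) -> mob M (point v) = point (mulV_col M v).
Proof.
  destruct v as [u w]; intros Hv; unfold mulV_col; cbn [fst snd].
  destruct (A2_eq_dec w A0) as [->|Hw].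
  - assert (Hu : u <> A0) by (intros ->; apply Hv; reflexivity).
    unfold point at 1; cbn [fst snd]; destruct (A2_eq_dec A0 A0) as [_|]; [|contradiction].
    rewrite mob_None, <- (point_mulA_r _ _ u) by exact Hu.
    f_equal; f_equal; nc_ring.
  - unfold point at 1; cbn [fst snd]; destruct (A2_eq_dec w A0) as [|_]; [contradiction|].
    rewrite mob_Some, <- (point_mulA_r _ _ w) by exact Hw.
    assert (Hx : mulA (mulA u (invA w)) w = u).
    { transitivity (mulA u (mulA (invA w) w)); [nc_ring|].
      rewrite invA_l by exact Hw; nc_ring. }
    set (x := mulA u (invA w)) in *; clearbody x; subst u.
    f_equal; f_equal; nc_ring.
Qed.

Lemma hcoord_neq0 p : hcoord p <> (A0, A0).
Proof.
  destruct p; cbn; intros E; apply A1_neq_A0; [exact (f_equal snd E) | exact (f_equal fst E)].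
Qed.

Lemma mulV_col_mulV M N v : mulV_col (mulV M N) v = mulV_col M (mulV_col N v).
Proof. destruct M, N, v; unfold mulV_col; cbn; f_equal; nc_ring. Qed.

Lemma mulV_col_neq0 M v : is_vahlen M -> v <> (A0, A0) -> mulV_col M v <> (A0, A0).
Proof.
  intros HM Hv E; apply Hv; destruct v as [y1 y2].
  destruct (vahlen_kernel M y1 y2 HM (f_equal fst E) (f_equal snd E)) as [-> ->].
  reflexivity.
Qed.

Lemma mob_mulV M N p : is_vahlen N -> mob (mulV M N) p = mob M (mob N p).
Proof.
  intros HN; assert (Hp := hcoord_neq0 p).
  rewrite <- (point_hcoord p), !mob_point, mulV_col_mulV
    by (assumption || apply mulV_col_neq0; assumption).
  reflexivity.
Qed.

Lemma mob_oneV p : mob oneV p = p.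
Proof.
  rewrite <- (point_hcoord p) at 2; rewrite <- (point_hcoord p) at 1.
  rewrite mob_point by apply hcoord_neq0.
  f_equal; destruct (hcoord p); unfold mulV_col; cbn; f_equal; nc_ring.
Qed.

Lemma line_act_mulV M N L :
  is_vahlen N -> line_act (mulV M N) L = line_act M (line_act N L).
Proof. intros HN; unfold line_act; cbn [fst snd]; rewrite !mob_mulV by exact HN; reflexivity. Qed.

Lemma flag_act_mulV M N F :
  is_vahlen N -> flag_act (mulV M N) F = flag_act M (flag_act N F).
Proof.
  intros HN; unfold flag_act at 1 2 3; cbn [fl_line fl_arc].
  rewrite line_act_mulV by exact HN; f_equal.
  apply functional_extensionality; intros y; apply propositional_extensionality; split.
  - intros [x [Hx ->]]; rewrite mob_mulV by exact HN; eauto.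
  - intros [z [[x [Hx ->]] ->]]; rewrite <- mob_mulV by exact HN; eauto.
Qed.

Lemma line_act_oneV L : line_act oneV L = L.
Proof. destruct L; unfold line_act; cbn [fst snd]; rewrite !mob_oneV; reflexivity. Qed.

Lemma flag_act_oneV F : flag_act oneV F = F.
Proof.
  destruct F as [L arc]; unfold flag_act; cbn [fl_line fl_arc].
  rewrite line_act_oneV; f_equal.
  apply functional_extensionality; intros y; apply propositional_extensionality; split.
  - intros [x [Hx ->]]; rewrite mob_oneV; exact Hx.
  - intros Hy; exists y; rewrite mob_oneV; auto.
Qed.

Lemma line_act_invV_l M L : is_vahlen M -> line_act (invV M) (line_act M L) = L.
Proof. intros HM; rewrite <- line_act_mulV, invV_l, line_act_oneV by exact HM; reflexivity. Qed.

Lemma flag_act_invV_l M F : is_vahlen M -> flag_act (invV M) (flag_act M F) = F.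
Proof. intros HM; rewrite <- flag_act_mulV, invV_l, flag_act_oneV by exact HM; reflexivity. Qed.

(** * The stabilizer of [(Lv, Fh)] *)

Definition is_sign (e : R) : Prop := e = 1 \/ e = -1.

Lemma is_sign_mul e f : is_sign e -> is_sign f -> is_sign (e * f).
Proof. intros [-> | ->] [-> | ->]; [left | right | right | left]; ring. Qed.

Lemma is_sign_sq e : is_sign e -> e * e = 1.
Proof. intros [-> | ->]; ring. Qed.

Lemma stabilizer_diag N : pdet N = A1 -> line_act N Lv = Lv -> mob N (Some A1) = Some A1 ->
  exists a, N = mkV a A0 A0 a /\ mulA a (revA a) = A1.
Proof.
  destruct N as [a b c d]; unfold line_act, Lv, pdet; cbn [fst snd va vb vc vd].
  intros Hdet Hline H1.
  assert (H0 := f_equal fst Hline); assert (Hinf := f_equal snd Hline); cbn [fst snd] in H0, Hinf.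
  rewrite mob_None in Hinf; apply point_None in Hinf; cbn [vc] in Hinf; subst c.
  rewrite mob_Some in H0, H1; cbn [va vb vc vd] in H0, H1.
  apply point_Some in H0 as [_ Hb]; apply point_Some in H1 as [_ Ha].
  assert (b = A0) by (transitivity (addA (mulA a A0) b); [nc_ring | rewrite Hb; nc_ring]).
  subst b.
  assert (a = d) by (transitivity (addA (mulA a A1) A0); [nc_ring | rewrite Ha; nc_ring]).
  subst d; exists a; split; [reflexivity|].
  rewrite <- Hdet; nc_ring.
Qed.

Lemma Ae1_in_arc_Fh : fl_arc Fh (Some Ae1).
Proof.
  exists (PI / 2); split; [split; [apply PI2_RGT_0 | generalize PI_RGT_0; lra]|].
  rewrite cos_PI2, sin_PI2; reflexivity.
Qed.

Lemma norm2A_unit a : mulA a (revA a) = A1 -> norm2A a = 1.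
Proof.
  intros H; apply (f_equal norm2A) in H; rewrite norm2A_mulA, norm2A_revA in H.
  assert (norm2A A1 = 1) by (unfold norm2A; cbn; ring).
  generalize (norm2A_ge0 a); nra.
Qed.

(* Conjugation by the unit [a] preserves norms, so [|1 + cos t + e1 sin t|^2 = |1 + e1|^2 = 2]. *)
Lemma arc_point_conj_e1 a t : mulA a (revA a) = A1 ->
  mulA (mkA (cos t) (sin t) 0 0) a = mulA a Ae1 -> 0 < t < PI ->
  mkA (cos t) (sin t) 0 0 = Ae1.
Proof.
  intros Hu Hy Ht.
  assert (E : mulA (addA A1 (mkA (cos t) (sin t) 0 0)) a = mulA a (addA A1 Ae1)).
  { transitivity (addA a (mulA (mkA (cos t) (sin t) 0 0) a)); [nc_ring | rewrite Hy; nc_ring]. }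
  apply (f_equal norm2A) in E; rewrite !norm2A_mulA, (norm2A_unit a Hu) in E.
  unfold norm2A, addA, A1, Ae1 in E; cbn in E.
  assert (Hs : 0 < sin t) by (apply sin_gt_0; apply Ht).
  assert (Hsc := sin2_cos2 t); unfold Rsqr in Hsc.
  assert (cos t = 0) by nra; assert (sin t = 1) by nra.
  unfold Ae1; f_equal; assumption.
Qed.

Lemma unit_commuting_e1 a : mulA a (revA a) = A1 -> mulA Ae1 a = mulA a Ae1 ->
  exists e, is_sign e /\ a = rA e.
Proof.
  destruct a as [w x y z]; intros Hu Hc.
  assert (C2 := f_equal q2 Hc); assert (C3 := f_equal q3 Hc);
  assert (U0 := f_equal q0 Hu); assert (U1 := f_equal q1 Hu).
  unfold mulA, revA, Ae1, A1 in C2, C3, U0, U1; cbn in C2, C3, U0, U1.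
  assert (y = 0) by lra; assert (z = 0) by lra; subst y z.
  assert (x = 0) by nra; subst x.
  exists w; split; [|unfold rA; reflexivity].
  destruct (Rmult_integral (w - 1) (w + 1)) as [H | H]; [nra | left | right]; lra.
Qed.

Lemma stabilizer_Lv_Fh N : pdet N = A1 -> line_act N Lv = Lv -> flag_act N Fh = Fh ->
  exists e, is_sign e /\ N = scaleV e oneV.
Proof.
  intros Hdet HL HF.
  destruct (stabilizer_diag N Hdet HL) as [a [-> Hu]];
    [exact (f_equal (fun F => snd (fl_line F)) HF)|].
  assert (Harc : fl_arc Fh (mob (mkV a A0 A0 a) (Some Ae1))).
  { rewrite <- HF; exists (Some Ae1); split; [exact Ae1_in_arc_Fh | reflexivity]. }
  destruct Harc as [t [Ht Hy]]; rewrite mob_Some in Hy; cbn [va vb vc vd] in Hy.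
  apply point_Some in Hy as [_ Hy].
  assert (He1 : mkA (cos t) (sin t) 0 0 = Ae1).
  { apply (arc_point_conj_e1 a t Hu); [|exact Ht].
    transitivity (mulA (mkA (cos t) (sin t) 0 0) (addA (mulA A0 Ae1) a));
      [nc_ring | rewrite <- Hy; nc_ring]. }
  rewrite He1 in Hy.
  destruct (unit_commuting_e1 a Hu) as [e [He ->]];
    [transitivity (mulA Ae1 (addA (mulA A0 Ae1) a)); [nc_ring | rewrite <- Hy; nc_ring]|].
  exists e; split; [exact He|].
  apply Vahlen_ext; cbn [va vb vc vd scaleV oneV]; coord_ring.
Qed.

(** * The exponential of [A2] *)

Definition seriesA (u : nat -> A2) : A2 :=
  mkA (Series (fun n => q0 (u n))) (Series (fun n => q1 (u n)))
      (Series (fun n => q2 (u n))) (Series (fun n => q3 (u n))).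

Definition sumA (n : nat) (f : nat -> A2) : A2 :=
  mkA (sum_f_R0 (fun k => q0 (f k)) n) (sum_f_R0 (fun k => q1 (f k)) n)
      (sum_f_R0 (fun k => q2 (f k)) n) (sum_f_R0 (fun k => q3 (f k)) n).

Definition cauchy_prodA (u v : nat -> A2) (n : nat) : A2 :=
  sumA n (fun k => mulA (u k) (v (n - k)%nat)).

Definition abs_summableA (u : nat -> A2) : Prop :=
  ex_series (fun n => Rabs (q0 (u n))) /\ ex_series (fun n => Rabs (q1 (u n))) /\
  ex_series (fun n => Rabs (q2 (u n))) /\ ex_series (fun n => Rabs (q3 (u n))).

Lemma is_series_cauchy_prod (a b : nat -> R) :
  ex_series (fun n => Rabs (a n)) -> ex_series (fun n => Rabs (b n)) ->
  is_series (fun n => sum_f_R0 (fun k => a k * b (n - k)%nat) n) (Series a * Series b).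
Proof.
  intros Ha Hb; apply is_series_mult; auto; apply Series_correct, ex_series_Rabs; auto.
Qed.

Lemma sum_f_R0_lin4 (s1 s2 s3 s4 : R) (f1 f2 f3 f4 : nat -> R) n :
  sum_f_R0 (fun k => s1 * f1 k + s2 * f2 k + s3 * f3 k + s4 * f4 k) n =
  s1 * sum_f_R0 f1 n + s2 * sum_f_R0 f2 n + s3 * sum_f_R0 f3 n + s4 * sum_f_R0 f4 n.
Proof. induction n as [|n IH]; cbn; [|rewrite IH]; ring. Qed.

Lemma is_series_lin4 (s1 s2 s3 s4 : R) {f1 f2 f3 f4 : nat -> R} {l1 l2 l3 l4 : R}
  (g : nat -> R) (L : R) :
  is_series f1 l1 -> is_series f2 l2 -> is_series f3 l3 -> is_series f4 l4 ->
  L = s1 * l1 + s2 * l2 + s3 * l3 + s4 * l4 ->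
  (forall n, g n = s1 * f1 n + s2 * f2 n + s3 * f3 n + s4 * f4 n) ->
  is_series g L.
Proof.
  intros H1 H2 H3 H4 -> Hg; apply (is_series_ext _ _ _ (fun n => eq_sym (Hg n))).
  apply (is_series_scal_l s1) in H1; apply (is_series_scal_l s2) in H2;
  apply (is_series_scal_l s3) in H3; apply (is_series_scal_l s4) in H4.
  exact (is_series_plus _ _ _ _ (is_series_plus _ _ _ _ (is_series_plus _ _ _ _ H1 H2) H3) H4).
Qed.

Lemma seriesA_mulA u v : abs_summableA u -> abs_summableA v ->
  mulA (seriesA u) (seriesA v) = seriesA (cauchy_prodA u v).
Proof.
  intros [U0 [U1 [U2 U3]]] [V0 [V1 [V2 V3]]].
  apply A2_ext; symmetry; apply is_series_unique;
    [ refine (is_series_lin4 1 (-1) (-1) (-1) _ _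
        (is_series_cauchy_prod _ _ U0 V0) (is_series_cauchy_prod _ _ U1 V1)
        (is_series_cauchy_prod _ _ U2 V2) (is_series_cauchy_prod _ _ U3 V3) _ _)
    | refine (is_series_lin4 1 1 1 (-1) _ _
        (is_series_cauchy_prod _ _ U0 V1) (is_series_cauchy_prod _ _ U1 V0)
        (is_series_cauchy_prod _ _ U2 V3) (is_series_cauchy_prod _ _ U3 V2) _ _)
    | refine (is_series_lin4 1 (-1) 1 1 _ _
        (is_series_cauchy_prod _ _ U0 V2) (is_series_cauchy_prod _ _ U1 V3)
        (is_series_cauchy_prod _ _ U2 V0) (is_series_cauchy_prod _ _ U3 V1) _ _)
    | refine (is_series_lin4 1 1 (-1) 1 _ _
        (is_series_cauchy_prod _ _ U0 V3) (is_series_cauchy_prod _ _ U1 V2)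
        (is_series_cauchy_prod _ _ U2 V1) (is_series_cauchy_prod _ _ U3 V0) _ _) ];
  first
    [ unfold mulA, seriesA; cbn; ring
    | intros n; unfold cauchy_prodA, sumA; cbn [q0 q1 q2 q3];
      rewrite <- sum_f_R0_lin4; apply sum_eq; intros; unfold mulA; cbn; ring ].
Qed.

Definition exp_term (y : A2) (m : nat) : A2 := scaleA (/ INR (fact m)) (powA y m).

Lemma expA_seriesA y : expA y = seriesA (exp_term y).
Proof.
  apply A2_ext; cbn; apply Series_ext; intros m; unfold exp_term, scaleA; cbn;
    unfold Rdiv; ring.
Qed.

Lemma norm2A_powA y m : norm2A (powA y m) = norm2A y ^ m.
Proof.
  induction m as [|m IH]; cbn [powA pow].
  - unfold norm2A, A1; cbn; ring.
  - rewrite norm2A_mulA, IH; reflexivity.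
Qed.

Lemma Rabs_coord_powA_le y m (c : R) :
  c ^ 2 <= norm2A (powA y m) -> Rabs c <= (1 + norm2A y) ^ m.
Proof.
  intros Hc; assert (Hy := norm2A_ge0 y).
  assert (HK : 0 <= (1 + norm2A y) ^ m) by (apply pow_le; lra).
  assert (Hb : norm2A y ^ m <= ((1 + norm2A y) ^ m) ^ 2).
  { rewrite <- pow_mult, Nat.mul_comm, pow_mult; apply pow_incr; nra. }
  rewrite norm2A_powA in Hc.
  rewrite <- (Rabs_pos_eq _ HK); apply Rsqr_le_abs_0; unfold Rsqr.
  replace (c * c) with (c ^ 2) by ring.
  replace ((1 + norm2A y) ^ m * (1 + norm2A y) ^ m) with (((1 + norm2A y) ^ m) ^ 2) by ring.
  lra.
Qed.

Lemma ex_series_exp_bound (K : R) : ex_series (fun m => K ^ m / INR (fact m)).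
Proof.
  exists (exp K); eapply is_series_ext; [|apply (is_exp_Reals K)].
  intros n; cbn; rewrite pow_n_pow; unfold scal; cbn; unfold mult; cbn; unfold Rdiv; ring.
Qed.

Lemma ex_series_abs_coord_exp (f : nat -> R) y :
  (forall m, f m ^ 2 <= norm2A (powA y m)) ->
  ex_series (fun m => Rabs (/ INR (fact m) * f m)).
Proof.
  intros Hf.
  apply (@ex_series_le R_AbsRing R_CompleteNormedModule _
           (fun m => (1 + norm2A y) ^ m / INR (fact m))); [|apply ex_series_exp_bound].
  intros m; change (norm (Rabs (/ INR (fact m) * f m)))
    with (Rabs (Rabs (/ INR (fact m) * f m))).
  assert (Hm : 0 < / INR (fact m)) by apply Rinv_0_lt_compat, INR_fact_lt_0.
  rewrite Rabs_Rabsolu, Rabs_mult, (Rabs_pos_eq (/ _)) by lra.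
  unfold Rdiv; rewrite Rmult_comm; apply Rmult_le_compat_r; [lra|].
  apply Rabs_coord_powA_le, Hf.
Qed.

Lemma abs_summableA_exp_term y : abs_summableA (exp_term y).
Proof.
  unfold abs_summableA, exp_term, scaleA; cbn [q0 q1 q2 q3].
  repeat split; apply (ex_series_abs_coord_exp _ y); intros m;
    destruct (powA y m); unfold norm2A; cbn; nra.
Qed.

Lemma powA_succ_r y m : powA y (S m) = mulA (powA y m) y.
Proof.
  induction m as [|m IH]; cbn [powA] in *; [nc_ring|].
  rewrite IH at 1; nc_ring.
Qed.

Lemma powA_add y k j : mulA (powA y k) (powA y j) = powA y (k + j).
Proof. induction k as [|k IH]; cbn [powA Nat.add]; [nc_ring | rewrite <- IH; nc_ring]. Qed.

Lemma powA_oppA y m : powA (oppA y) m = scaleA ((-1) ^ m) (powA y m).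
Proof.
  induction m as [|m IH]; cbn [powA pow]; [coord_ring|].
  rewrite IH; generalize (powA y m); coord_ring.
Qed.

Lemma revA_powA y m : revA (powA y m) = powA (revA y) m.
Proof.
  induction m as [|m IH]; cbn [powA]; [apply revA_A1|].
  rewrite revA_mulA, IH, <- powA_succ_r; reflexivity.
Qed.

Lemma sumA_scaleA n (c : nat -> R) x :
  sumA n (fun k => scaleA (c k) x) = scaleA (sum_f_R0 c n) x.
Proof. unfold sumA, scaleA; cbn; f_equal; rewrite Rmult_comm, scal_sum; reflexivity. Qed.

(* By the binomial theorem the coefficients of [y^n] sum to [(1 - 1)^n / n!]. *)
Lemma cauchy_prodA_exp_term y n :
  cauchy_prodA (exp_term y) (exp_term (oppA y)) n = scaleA (0 ^ n / INR (fact n)) (powA y n).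
Proof.
  transitivity (sumA n (fun k => scaleA (/ INR (fact k) * (/ INR (fact (n - k)) * (-1) ^ (n - k)))
                                        (powA y n))).
  - unfold cauchy_prodA, sumA; f_equal; apply sum_eq; intros k Hk; f_equal;
      unfold exp_term; rewrite powA_oppA;
      replace (powA y n) with (mulA (powA y k) (powA y (n - k)))
        by (rewrite powA_add; f_equal; lia);
      generalize (powA y k) (powA y (n - k)); coord_ring.
  - rewrite sumA_scaleA; f_equal.
    replace 0 with (1 + -1) by ring; rewrite binomial; unfold Rdiv; rewrite Rmult_comm, scal_sum.
    apply sum_eq; intros i Hi; unfold Binomial.C; rewrite pow1.
    assert (H1 := INR_fact_neq_0 i); assert (H2 := INR_fact_neq_0 (n - i));
      assert (H3 := INR_fact_neq_0 n).
    field; auto.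
Qed.

Lemma Series_head (a : nat -> R) : (forall n, a (S n) = 0) -> Series a = a O.
Proof.
  intros H; apply is_series_unique, is_series_decr_1.
  apply (is_series_ext (fun _ => 0)); [intros n; rewrite H; reflexivity|].
  apply is_series_Reals; intros eps Heps; exists O; intros n _.
  assert (E : sum_f_R0 (fun _ : nat => 0) n = 0) by (induction n; cbn; [|rewrite IHn]; ring).
  unfold R_dist, plus, opp; cbn; rewrite E.
  replace (0 - (a O + - a O)) with 0 by ring; rewrite Rabs_R0; exact Heps.
Qed.

Lemma expA_mulA_oppA y : mulA (expA y) (expA (oppA y)) = A1.
Proof.
  rewrite !expA_seriesA, seriesA_mulA by apply abs_summableA_exp_term.
  apply A2_ext; unfold seriesA; cbn [q0 q1 q2 q3];
    (rewrite Series_head;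
      [ rewrite cauchy_prodA_exp_term; unfold scaleA, A1; cbn; lra
      | intros n; rewrite cauchy_prodA_exp_term; unfold scaleA, Rdiv; cbn; rewrite !Rmult_0_l; reflexivity ]).
Qed.

Lemma revA_expA y : revA (expA y) = expA (revA y).
Proof.
  unfold expA; unfold revA at 1; apply A2_ext; cbn [q0 q1 q2 q3];
    [ .. | rewrite <- Series_opp];
    apply Series_ext; intros m; rewrite <- revA_powA; unfold revA; cbn; unfold Rdiv; ring.
Qed.

Lemma invA_revA_expA d : invA (revA (expA d)) = expA (oppA (revA d)).
Proof. rewrite revA_expA; apply invA_unique, expA_mulA_oppA. Qed.

Lemma coshA_add_sinhA d : addA (coshA d) (sinhA d) = expA d.
Proof. unfold coshA, sinhA; generalize (expA d) (expA (oppA (revA d))); coordwise; field. Qed.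

Lemma coshA_sub_sinhA d : subA (coshA d) (sinhA d) = expA (oppA (revA d)).
Proof. unfold coshA, sinhA; generalize (expA d) (expA (oppA (revA d))); coordwise; field. Qed.

Lemma invA_oppA x : invA (oppA x) = oppA (invA x).
Proof.
  assert (H : norm2A (oppA x) = norm2A x) by (destruct x; unfold norm2A, oppA; cbn; ring).
  unfold invA; rewrite H; generalize (/ norm2A x); coord_ring.
Qed.

(** * The hexagon relation *)

Definition eq_up_to_sign (P Q : Vahlen) : Prop := exists e, is_sign e /\ P = scaleV e Q.

Lemma eq_up_to_sign_sym P Q : eq_up_to_sign P Q -> eq_up_to_sign Q P.
Proof.
  intros [e [He ->]]; exists e; split; [exact He|].
  rewrite scaleV_scaleV, is_sign_sq, scaleV_1 by exact He; reflexivity.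
Qed.

Lemma eq_up_to_sign_trans P Q T :
  eq_up_to_sign P Q -> eq_up_to_sign Q T -> eq_up_to_sign P T.
Proof.
  intros [e [He ->]] [f [Hf ->]]; exists (e * f); split; [apply is_sign_mul; assumption|].
  apply scaleV_scaleV.
Qed.

Lemma eq_up_to_sign_mulV P Q P' Q' :
  eq_up_to_sign P P' -> eq_up_to_sign Q Q' -> eq_up_to_sign (mulV P Q) (mulV P' Q').
Proof.
  intros [e [He ->]] [f [Hf ->]]; exists (e * f); split; [apply is_sign_mul; assumption|].
  rewrite mulV_scaleV_l, mulV_scaleV_r, scaleV_scaleV; reflexivity.
Qed.

Lemma eq_up_to_sign_invV P Q : eq_up_to_sign P Q -> eq_up_to_sign (invV P) (invV Q).
Proof. intros [e [He ->]]; exists e; split; [exact He | apply invV_scaleV]. Qed.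

Definition normalizes (i : Vahlen) (L : Line) (F : Flag) : Prop :=
  is_vahlen i /\ line_act i L = Lv /\ flag_act i F = Fh.

(* [B A^-1 P] fixes [(Lv, Fh)], hence is [+-1]. *)
Lemma normalizer_step A B P L F :
  is_vahlen A -> is_vahlen P -> normalizes B L F ->
  line_act A L = line_act P Lv -> flag_act A F = flag_act P Fh ->
  eq_up_to_sign P (mulV A (invV B)).
Proof.
  intros HA HP [HB [HBL HBF]] HAL HAF.
  assert (HA' := invV_vahlen A HA).
  destruct (stabilizer_Lv_Fh (mulV (mulV B (invV A)) P)) as [e [He HQ]].
  - apply pdet_mulV; [apply pdet_mulV; [apply HB | exact HA'] | exact HP].
  - rewrite !line_act_mulV, <- HAL, line_act_invV_l by assumption; exact HBL.
  - rewrite !flag_act_mulV, <- HAF, flag_act_invV_l by assumption; exact HBF.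
  - exists e; split; [exact He|].
    transitivity (mulV (mulV A (invV B)) (mulV (mulV B (invV A)) P)).
    + rewrite !mulV_assoc, <- (mulV_assoc A (invV B) B), invV_l, mulV_oneV_r, invV_r,
        mulV_oneV_l by assumption; reflexivity.
    + rewrite HQ, mulV_scaleV_r, mulV_oneV_r; reflexivity.
Qed.

Definition diag_cs (c s : A2) : Vahlen := mkV (addA c s) A0 A0 (subA c s).

Definition boost_cs (c s : A2) : Vahlen := mkV c s s c.

Lemma diagV_expA d a : (expA d = a \/ expA d = oppA a) ->
  eq_up_to_sign (diagV a) (diag_cs (coshA d) (sinhA d)).
Proof.
  unfold diag_cs; rewrite coshA_add_sinhA, coshA_sub_sinhA, <- invA_revA_expA.
  intros [<- | E].
  - exists 1; split; [left; reflexivity | rewrite scaleV_1; reflexivity].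
  - exists (-1); split; [right; reflexivity|].
    replace a with (oppA (expA d)) by (rewrite E; nc_ring).
    unfold diagV; rewrite revA_oppA, invA_oppA.
    apply Vahlen_ext; cbn; generalize (expA d) (invA (revA (expA d))); coord_ring.
Qed.

Lemma quat_hsl_step d L Fp Fn : quat_hsl d L Fp Fn ->
  exists A, normalizes A L Fp /\
    forall B, normalizes B L Fn -> eq_up_to_sign (diag_cs (coshA d) (sinhA d)) (mulV A (invV B)).
Proof.
  intros [A [a [HA [HAL [HAF [_ [HD [HDL [HDF Hexp]]]]]]]]].
  exists A; split; [exact (conj HA (conj HAL HAF))|].
  intros B HB; apply (eq_up_to_sign_trans _ (diagV a)).
  - apply eq_up_to_sign_sym, diagV_expA, Hexp.
  - apply (normalizer_step A B (diagV a) L Fn HA HD HB);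
      [rewrite HAL, HDL | symmetry; exact HDF]; reflexivity.
Qed.

Lemma cplx_hsl_step d F Lp Ln : cplx_hsl d F Lp Ln ->
  exists A, normalizes A Lp F /\
    forall B, normalizes B Ln F -> eq_up_to_sign (boost_cs (coshA d) (sinhA d)) (mulV A (invV B)).
Proof.
  intros [_ [_ [A [HA [HAF [HAL [HM [HMF HML]]]]]]]].
  exists A; split; [exact (conj HA (conj HAL HAF))|].
  intros B HB.
  exact (normalizer_step A B (Mdelta d) Ln F HA HM HB (eq_sym HML) (eq_trans HAF (eq_sym HMF))).
Qed.

Lemma mulV_telescope N1 N2 N3 N4 : is_vahlen N2 -> is_vahlen N3 ->
  mulV (mulV (mulV N1 (invV N2)) (mulV N2 (invV N3))) (mulV N3 (invV N4)) = mulV N1 (invV N4).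
Proof.
  intros H2 H3.
  rewrite !mulV_assoc, <- (mulV_assoc _ (invV N2) N2), invV_l, mulV_oneV_r,
    <- (mulV_assoc _ (invV N3) N3), invV_l, mulV_oneV_r by assumption; reflexivity.
Qed.

Lemma hexagon_closing N1 N2 N3 N4 N5 N6 P1 P2 P3 P4 P5 P6 :
  is_vahlen N2 -> is_vahlen N3 -> is_vahlen N5 -> is_vahlen N6 ->
  eq_up_to_sign P1 (mulV N1 (invV N2)) -> eq_up_to_sign P2 (mulV N2 (invV N3)) ->
  eq_up_to_sign P3 (mulV N3 (invV N4)) -> eq_up_to_sign P4 (mulV N4 (invV N5)) ->
  eq_up_to_sign P5 (mulV N5 (invV N6)) -> eq_up_to_sign P6 (mulV N6 (invV N1)) ->
  eq_up_to_sign (mulV (mulV P1 P2) P3) (invV (mulV (mulV P4 P5) P6)).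
Proof.
  intros H2 H3 H5 H6 S1 S2 S3 S4 S5 S6.
  apply (eq_up_to_sign_trans _ (mulV N1 (invV N4))).
  - rewrite <- (mulV_telescope N1 N2 N3 N4) by assumption.
    repeat apply eq_up_to_sign_mulV; assumption.
  - replace (mulV N1 (invV N4)) with (invV (mulV N4 (invV N1)))
      by (rewrite invV_mulV, invV_involutive; reflexivity).
    apply eq_up_to_sign_invV, eq_up_to_sign_sym.
    rewrite <- (mulV_telescope N4 N5 N6 N1) by assumption.
    repeat apply eq_up_to_sign_mulV; assumption.
Qed.

Lemma addA_double_inj x y : addA x x = addA y y -> x = y.
Proof.
  intros H; transitivity (scaleA (/ 2) (addA x x)); [coordwise; field|].
  rewrite H; coordwise; field.
Qed.

Lemma scaleA_rA k x : scaleA k x = mulA (rA k) x.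
Proof. coord_ring. Qed.

Lemma diag_boost_diag_halves c1 s1 c2 s2 c3 s3 :
  let X := mulV (mulV (diag_cs c1 s1) (boost_cs c2 s2)) (diag_cs c3 s3) in
  addA (addA (mulA (mulA s1 c2) s3) (mulA (mulA c1 c2) c3))
       (addA (mulA (mulA s1 c2) s3) (mulA (mulA c1 c2) c3)) = addA (va X) (vd X) /\
  addA (addA (mulA (mulA s1 c2) c3) (mulA (mulA c1 c2) s3))
       (addA (mulA (mulA s1 c2) c3) (mulA (mulA c1 c2) s3)) = subA (va X) (vd X) /\
  addA (subA (mulA (mulA s1 s2) s3) (mulA (mulA c1 s2) c3))
       (subA (mulA (mulA s1 s2) s3) (mulA (mulA c1 s2) c3)) = oppA (addA (vb X) (vc X)) /\
  addA (subA (mulA (mulA s1 s2) c3) (mulA (mulA c1 s2) s3))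
       (subA (mulA (mulA s1 s2) c3) (mulA (mulA c1 s2) s3)) = subA (vb X) (vc X).
Proof. cbn; repeat split; nc_ring. Qed.

Lemma boost_diag_boost_halves c4 s4 c5 s5 c6 s6 :
  let Z := mulV (mulV (boost_cs c4 s4) (diag_cs c5 s5)) (boost_cs c6 s6) in
  addA (addA (mulA (mulA s4 c5) s6) (mulA (mulA c4 c5) c6))
       (addA (mulA (mulA s4 c5) s6) (mulA (mulA c4 c5) c6)) = addA (va Z) (vd Z) /\
  addA (subA (mulA (mulA s4 s5) s6) (mulA (mulA c4 s5) c6))
       (subA (mulA (mulA s4 s5) s6) (mulA (mulA c4 s5) c6)) = subA (vd Z) (va Z) /\
  addA (addA (mulA (mulA s4 c5) c6) (mulA (mulA c4 c5) s6))
       (addA (mulA (mulA s4 c5) c6) (mulA (mulA c4 c5) s6)) = addA (vb Z) (vc Z) /\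
  addA (subA (mulA (mulA s4 s5) c6) (mulA (mulA c4 s5) s6))
       (subA (mulA (mulA s4 s5) c6) (mulA (mulA c4 s5) s6)) = subA (vc Z) (vb Z).
Proof. cbn; repeat split; nc_ring. Qed.

Lemma scaleV_invV_halves (k : R) X Z : X = scaleV k (invV Z) ->
  addA (va X) (vd X) = mulA (rA k) (revA (addA (va Z) (vd Z))) /\
  subA (va X) (vd X) = mulA (rA k) (revA (subA (vd Z) (va Z))) /\
  oppA (addA (vb X) (vc X)) = mulA (rA k) (revA (addA (vb Z) (vc Z))) /\
  subA (vb X) (vc X) = mulA (rA k) (revA (subA (vc Z) (vb Z))).
Proof.
  intros ->; destruct Z as [a b c d]; cbn.
  rewrite !scaleA_rA; repeat split; nc_ring.
Qed.

Lemma mulA_revA_double (k : R) w :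
  mulA (rA k) (revA (addA w w)) = addA (mulA (rA k) (revA w)) (mulA (rA k) (revA w)).
Proof. nc_ring. Qed.

(* The four identities are [(a + d)/2], [(a - d)/2], [-(b + c)/2] and [(b - c)/2] of the
   two sides of [P1 P2 P3 = +-(P4 P5 P6)^-1]. *)
Lemma hexagon_identities c1 s1 c2 s2 c3 s3 c4 s4 c5 s5 c6 s6 (k : R) :
  mulV (mulV (diag_cs c1 s1) (boost_cs c2 s2)) (diag_cs c3 s3)
  = scaleV k (invV (mulV (mulV (boost_cs c4 s4) (diag_cs c5 s5)) (boost_cs c6 s6))) ->
  addA (mulA (mulA s1 c2) s3) (mulA (mulA c1 c2) c3)
  = mulA (rA k) (revA (addA (mulA (mulA s4 c5) s6) (mulA (mulA c4 c5) c6))) /\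
  addA (mulA (mulA s1 c2) c3) (mulA (mulA c1 c2) s3)
  = mulA (rA k) (revA (subA (mulA (mulA s4 s5) s6) (mulA (mulA c4 s5) c6))) /\
  subA (mulA (mulA s1 s2) s3) (mulA (mulA c1 s2) c3)
  = mulA (rA k) (revA (addA (mulA (mulA s4 c5) c6) (mulA (mulA c4 c5) s6))) /\
  subA (mulA (mulA s1 s2) c3) (mulA (mulA c1 s2) s3)
  = mulA (rA k) (revA (subA (mulA (mulA s4 s5) c6) (mulA (mulA c4 s5) s6))).
Proof.
  intros H.
  destruct (diag_boost_diag_halves c1 s1 c2 s2 c3 s3) as [X1 [X2 [X3 X4]]].
  destruct (boost_diag_boost_halves c4 s4 c5 s5 c6 s6) as [Z1 [Z2 [Z3 Z4]]].
  destruct (scaleV_invV_halves _ _ _ H) as [K1 [K2 [K3 K4]]].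
  repeat split; apply addA_double_inj; rewrite <- mulA_revA_double.
  - rewrite X1, K1, Z1; reflexivity.
  - rewrite X2, K2, Z2; reflexivity.
  - rewrite X3, K3, Z3; reflexivity.
  - rewrite X4, K4, Z4; reflexivity.
Qed.

Theorem theorem1p1
  (L1 L3 L5 : Line) (F2 F4 F6 : Flag) (d1 d2 d3 d4 d5 d6 : A2) :
  is_line L1 -> is_line L3 -> is_line L5 ->
  is_flag F2 -> is_flag F4 -> is_flag F6 ->
  orthogonal L1 F2 -> orthogonal L3 F2 -> orthogonal L3 F4 ->
  orthogonal L5 F4 -> orthogonal L5 F6 -> orthogonal L1 F6 ->
  quat_hsl d1 L1 F6 F2 -> cplx_hsl d2 F2 L1 L3 ->
  quat_hsl d3 L3 F2 F4 -> cplx_hsl d4 F4 L3 L5 ->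
  quat_hsl d5 L5 F4 F6 -> cplx_hsl d6 F6 L5 L1 ->
  exists eps : R, (eps = 1 \/ eps = -1) /\
    addA (mulA (mulA (sinhA d1) (coshA d2)) (sinhA d3))
         (mulA (mulA (coshA d1) (coshA d2)) (coshA d3))
    = mulA (rA eps) (revA
        (addA (mulA (mulA (sinhA d4) (coshA d5)) (sinhA d6))
              (mulA (mulA (coshA d4) (coshA d5)) (coshA d6)))) /\
    addA (mulA (mulA (sinhA d1) (coshA d2)) (coshA d3))
         (mulA (mulA (coshA d1) (coshA d2)) (sinhA d3))
    = mulA (rA eps) (revA
        (subA (mulA (mulA (sinhA d4) (sinhA d5)) (sinhA d6))
              (mulA (mulA (coshA d4) (sinhA d5)) (coshA d6)))) /\
    subA (mulA (mulA (sinhA d1) (sinhA d2)) (sinhA d3))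
         (mulA (mulA (coshA d1) (sinhA d2)) (coshA d3))
    = mulA (rA eps) (revA
        (addA (mulA (mulA (sinhA d4) (coshA d5)) (coshA d6))
              (mulA (mulA (coshA d4) (coshA d5)) (sinhA d6)))) /\
    subA (mulA (mulA (sinhA d1) (sinhA d2)) (coshA d3))
         (mulA (mulA (coshA d1) (sinhA d2)) (sinhA d3))
    = mulA (rA eps) (revA
        (subA (mulA (mulA (sinhA d4) (sinhA d5)) (coshA d6))
              (mulA (mulA (coshA d4) (sinhA d5)) (sinhA d6)))).
Proof.
  intros _ _ _ _ _ _ _ _ _ _ _ _ Q1 C2 Q3 C4 Q5 C6.
  destruct (quat_hsl_step _ _ _ _ Q1) as [N1 [HN1 S1]].
  destruct (cplx_hsl_step _ _ _ _ C2) as [N2 [HN2 S2]].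
  destruct (quat_hsl_step _ _ _ _ Q3) as [N3 [HN3 S3]].
  destruct (cplx_hsl_step _ _ _ _ C4) as [N4 [HN4 S4]].
  destruct (quat_hsl_step _ _ _ _ Q5) as [N5 [HN5 S5]].
  destruct (cplx_hsl_step _ _ _ _ C6) as [N6 [HN6 S6]].
  destruct (hexagon_closing N1 N2 N3 N4 N5 N6 _ _ _ _ _ _
              (proj1 HN2) (proj1 HN3) (proj1 HN5) (proj1 HN6)
              (S1 N2 HN2) (S2 N3 HN3) (S3 N4 HN4) (S4 N5 HN5) (S5 N6 HN6) (S6 N1 HN1))
    as [k [Hk Hrel]].
  exists k; split; [exact Hk | apply hexagon_identities, Hrel].
Qed.
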